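(* Let $\alpha,\beta\ge1$. For every $p\in\mathcal{P}_{\alpha,\beta}$, the total degree of $\pi(p)\in k[\mathbf{x}]$ equals $\deg(f_{[n]})\,\alpha+\beta$, and in particular is at least $3$.
   Context: Let $k$ be a field of characteristic zero, $n\ge3$, $k[\mathbf{x}]=k[x_1,\ldots,x_n]$, $k[t,\mathbf{x}]=k[t,x_1,\ldots,x_n]$. $D=\sum_{j=1}^{n-1}(n-j)\,x_{j+1}\,\partial/\partial x_j$. $f_{[2m-1]}=\frac12\sum_{i=1}^{2m-1}(-1)^{i-1}\binom{2m-2}{i-1}x_ix_{2m-i}$ for $n=2m-1$, $m\ge2$; $f_{[2m]}=D(f_{[2m-1]})^2-2D^2(f_{[2m-1]})f_{[2m-1]}$ for $n=2m$, $m\ge2$ (a nonzero homogeneous polynomial of degree $2$ resp. $4$). $\pi:k[t,\mathbf{x}]\to k[\mathbf{x}]$ is the $k[\mathbf{x}]$-algebra map with $t\mapsto f_{[n]}$. For nonzero $p$, $\mathrm{supp}(p)$ is the set of exponent vectors $(i_0,\ldots,i_n)$ of monomials $t^{i_0}x_1^{i_1}\cdots x_n^{i_n}$ with nonzero coefficient, $\deg_{\mathbf w}(p)=\max\{\sum_j i_jw_j:(i_0,\ldots,i_n)\in\mathrm{supp}(p)\}$, and $\mathrm{lt}(p)$ is the leading term for the lexicographic order with $t>x_1>\cdots>x_n$. With $\mathbf{w}_1=(1,\ldots,1)$ and $\mathbf{w}_2$ the weight with $n-2$ on $t$ and $2n-j-1$ on $x_j$, $\mathcal{P}_{\alpha,\beta}$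 is the set of nonzero $p\in k[t,\mathbf{x}]$ with $\deg_{\mathbf{w}_1}(p)\le\alpha+\beta$, $\deg_{\mathbf{w}_2}(p)\le(n-2)\alpha+(n-1)\beta$ and $\mathrm{lt}(p)\in k^*t^\alpha x_n^\beta$. *)

From HB Require Import structures.
From mathcomp Require Import all_boot all_order all_algebra.
From mathcomp Require Import mpoly.
Set Implicit Arguments. Unset Strict Implicit. Unset Printing Implicit Defensive.
Import Order.TTheory GRing.Theory.
Local Open Scope ring_scope.

(* Variables of k[x] = {mpoly k[n]} : x_1,...,x_n are 'X_0,...,'X_(n-1).
   Variables of k[t,x] = {mpoly k[n.+1]} : t is 'X_0, x_j is 'X_j. *)

Section Defs.
Variables (k : fieldType) (n : nat).

(* D = sum_{j=1}^{n-1} (n-j) x_{j+1} d/dx_j ; in 0-based indices: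
   x_{j} = 'X_(j-1), so the term for 0-based i (= j-1) is
   (n - (i+1)) 'X_(i+1) * d/d'X_i. *)
Definition Dop (p : {mpoly k[n]}) : {mpoly k[n]} :=
  \sum_(i < n) \sum_(j < n | val j == (val i).+1)
     (n - val j)%:R *: ('X_j * mderiv i p).

(* f_{[2m-1]} = 1/2 sum_{i=1}^{2m-1} (-1)^{i-1} C(2m-2,i-1) x_i x_{2m-i},
   viewed in k[x_1..x_n]; 0-based: i' = i-1, partner index 2m-2-i'. *)
Definition f_odd (m : nat) : {mpoly k[n]} :=
  2%:R^-1 *: \sum_(i < n) \sum_(j < n | (val i + val j == (2 * m - 2)%N))
     (((-1) ^+ val i) * ('C(2 * m - 2, val i))%:R) *: ('X_i * 'X_j).

Definition f_n : {mpoly k[n]} :=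
  if odd n then f_odd (n.+1./2)
  else Dop (f_odd (n./2)) ^+ 2 - 2%:R * Dop (Dop (f_odd (n./2))) * f_odd (n./2).

Definition pi_f (p : {mpoly k[n.+1]}) : {mpoly k[n]} :=
  comp_mpoly (cons_tuple f_n (mktuple (fun i : 'I_n => 'X_i))) p.

Definition totdeg (N : nat) (q : {mpoly k[N]}) : nat := (msize q).-1.

Definition wdeg (w : 'I_n.+1 -> nat) (p : {mpoly k[n.+1]}) : nat :=
  \max_(m <- msupp p) \sum_(i < n.+1) w i * m i.

Definition w1 (i : 'I_n.+1) : nat := 1.
Definition w2 (i : 'I_n.+1) : nat :=
  if val i == 0%N then (n - 2)%N else (2 * n - val i - 1)%N.

(* lexicographic order with t > x_1 > ... > x_n *)
Definition mlexlt (m1 m2 : 'X_{1..n.+1}) : bool :=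
  [exists i : 'I_n.+1,
     [forall j : 'I_n.+1, (val j < val i)%N ==> (m1 j == m2 j)] && (m1 i < m2 i)%N].

Definition mono_tx (a b : nat) : 'X_{1..n.+1} :=
  [multinom (if val i == 0%N then a else if val i == n then b else 0%N) | i < n.+1].

(* lt(p) in k^* t^a x_n^b : the lex-largest monomial of supp(p) is t^a x_n^b *)
Definition lt_is (p : {mpoly k[n.+1]}) (a b : nat) : Prop :=
  mono_tx a b \in msupp p /\
  forall m, m \in msupp p -> m != mono_tx a b -> mlexlt m (mono_tx a b).

Definition calP (a b : nat) (p : {mpoly k[n.+1]}) : Prop :=
  [/\ p != 0,
      (wdeg w1 p <= a + b)%N,
      (wdeg w2 p <= (n - 2) * a + (n - 1) * b)%N
    & lt_is p a b].

End Defs.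

(* For a monomial, pi(t^e x^u) = f^e x^u has degree e deg f + |u|.  The two
   conditions of P_{alpha,beta} that matter are: every monomial of p has total
   degree <= alpha + beta (weight w1), and t-exponent <= alpha (lexicographic
   leading term t^alpha x_n^beta).  Split pi(p) = f^alpha G + B, where G
   collects the monomials with t-exponent alpha and total degree alpha + beta.
   G is homogeneous of degree beta and nonzero (it contains x_n^beta), while,
   as soon as deg f >= 2, every monomial of B has image of degree
   < alpha deg f + beta.  Hence deg pi(p) = alpha deg f + beta. *)

From HB Require Import structures.
From mathcomp Require Import all_boot all_order all_algebra.
From mathcomp Require Import mpoly.
From mathcomp Require Import zify.
Set Implicit Arguments. Unset Strict Implicit. Unset Printing Implicit Defensive.
Import GRing.Theory.
Local Open Scope ring_scope.

(* Total degree totdeg p = (msize p).-1, which is 0 for p = 0. *)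
Section TotalDegree.
Variables (k : fieldType) (N : nat).
Implicit Types (p q : {mpoly k[N]}) (m : 'X_{1..N}).

Lemma totdeg0 : totdeg (0 : {mpoly k[N]}) = 0%N.
Proof. by rewrite /totdeg msize0. Qed.

Lemma totdeg1 : totdeg (1 : {mpoly k[N]}) = 0%N.
Proof. by rewrite /totdeg msize1. Qed.

Lemma totdegX m : totdeg ('X_[m] : {mpoly k[N]}) = mdeg m.
Proof. by rewrite /totdeg msizeX. Qed.

Lemma mdeg_le_totdeg p m : m \in msupp p -> (mdeg m <= totdeg p)%N.
Proof. by move/msize_mdeg_lt; rewrite /totdeg; case: (msize p). Qed.

Lemma totdegM p q : p != 0 -> q != 0 -> totdeg (p * q) = (totdeg p + totdeg q)%N.
Proof.
move=> nzp nzq; rewrite /totdeg msizeM //.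
by move: nzp nzq; rewrite -!msize_poly_eq0; move: (msize p) (msize q); lia.
Qed.

Lemma totdegM_le p q : (totdeg (p * q) <= totdeg p + totdeg q)%N.
Proof.
have [->|nzp] := eqVneq p 0; first by rewrite mul0r totdeg0.
have [->|nzq] := eqVneq q 0; first by rewrite mulr0 totdeg0.
by rewrite totdegM.
Qed.

Lemma totdegXn p e : totdeg (p ^+ e) = (e * totdeg p)%N.
Proof.
have [->|nzp] := eqVneq p 0.
  by case: e => [|e]; rewrite ?expr0 ?totdeg1 // expr0n totdeg0 muln0.
elim: e => [|e IH]; first by rewrite expr0 totdeg1.
by rewrite exprS totdegM ?expf_neq0 // IH mulSn.
Qed.

Lemma totdeg_prod_le (I : Type) (r : seq I) (P : pred I) (F : I -> {mpoly k[N]}) :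
  (totdeg (\prod_(i <- r | P i) F i) <= \sum_(i <- r | P i) totdeg (F i))%N.
Proof.
elim/big_rec2: _ => [|i s x _ IH]; first by rewrite totdeg1.
by apply: leq_trans (totdegM_le _ _) _; rewrite leq_add2l.
Qed.

Lemma totdegZ_le (c : k) p : (totdeg (c *: p) <= totdeg p)%N.
Proof. by rewrite /totdeg; move: (msizeZ_le p c); move: (msize _) (msize _); lia. Qed.

Lemma totdegD_le p q : (totdeg (p + q) <= maxn (totdeg p) (totdeg q))%N.
Proof.
by rewrite /totdeg; move: (msizeD_le p q); move: (msize _) (msize _) (msize _); lia.
Qed.

Lemma totdeg_sum_le (I : Type) (r : seq I) (P : pred I) (F : I -> {mpoly k[N]}) d :
  (forall i, P i -> totdeg (F i) <= d)%N -> (totdeg (\sum_(i <- r | P i) F i) <= d)%N.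
Proof.
move=> hF; elim/big_rec: _ => [|i s Pi IH]; first by rewrite totdeg0.
by apply: leq_trans (totdegD_le _ _) _; rewrite geq_max hF.
Qed.

Lemma totdegD_dom p q : (totdeg q < totdeg p)%N -> totdeg (p + q) = totdeg p.
Proof.
rewrite /totdeg => lt_qp.
have nzp : p != 0 by rewrite -msize_poly_eq0; apply: contraTneq lt_qp => ->.
have lt_sz : (msize q < msize p)%N by move: lt_qp; lia.
congr predn; apply/eqP; rewrite eqn_leq; apply/andP; split.
  by apply: leq_trans (msizeD_le _ _) _; rewrite geq_max leqnn ltnW.
rewrite -(mlead_deg nzp); apply: msize_mdeg_lt.
rewrite mcoeff_msupp mcoeffD.
have -> : q@_(mlead p) = 0.
  by apply/eqP; rewrite mcoeff_eq0; apply: msize_mdeg_ge; rewrite -ltnS (mlead_deg nzp).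
by rewrite addr0 mleadc_eq0.
Qed.

End TotalDegree.

Lemma totdeg_comp_le (k : fieldType) (n N : nat) (lq : n.-tuple {mpoly k[N]})
    (p : {mpoly k[n]}) :
  (forall i, totdeg (tnth lq i) <= 1)%N -> (totdeg (p \mPo lq) <= totdeg p)%N.
Proof.
move=> hlq; rewrite comp_mpolyE big_seq; apply: totdeg_sum_le => m msm.
apply: leq_trans (totdegZ_le _ _) _; apply: leq_trans (totdeg_prod_le _ _ _) _.
apply: leq_trans (mdeg_le_totdeg msm); rewrite mdegE; apply: leq_sum => i _.
by rewrite totdegXn -[leqRHS]muln1 leq_mul2l hlq orbT.
Qed.

(* Substitution of f for the first variable t of k[t, x_1, ..., x_n]; the map
   pi of the theorem is subst_t (f_n k n) by definition. *)
Section SubstitutionForT.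
Variables (k : fieldType) (n : nat) (f : {mpoly k[n]}).
Implicit Types (p : {mpoly k[n.+1]}) (m : 'X_{1..n.+1}).

Definition subst_t p : {mpoly k[n]} := p \mPo cons_tuple f [tuple 'X_i | i < n].

Definition tl m : 'X_{1..n} := [multinom m (lift ord0 i) | i < n].

Lemma mdeg_tl m : mdeg m = (m ord0 + mdeg (tl m))%N.
Proof.
rewrite !mdegE big_ord_recl; congr (_ + _)%N.
by apply: eq_bigr => i _; rewrite mnmE.
Qed.

Lemma tl_inj m1 m2 : m1 ord0 = m2 ord0 -> tl m1 = tl m2 -> m1 = m2.
Proof.
move=> e0 /mnmP etl; apply/mnmP => i.
by case: (unliftP ord0 i) => [j ->|->] //; have := etl j; rewrite !mnmE.
Qed.

Lemma subst_tX m : subst_t 'X_[m] = f ^+ m ord0 * 'X_[tl m].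
Proof.
rewrite /subst_t comp_mpolyX big_ord_recl (tnth_nth 0) /=; congr (_ * _).
rewrite mpolyXE_id; apply: eq_bigr => i _.
by rewrite (tnthS f [tuple 'X_i0 | i0 < n] i) tnth_mktuple mnmE.
Qed.

Variables (a b : nat).

(* Monomials t^a x^u with |u| = b: they produce the leading part of subst_t p. *)
Definition top_mnm m : bool := (m ord0 == a) && (mdeg m == a + b)%N.

Definition top_part p : {mpoly k[n]} :=
  \sum_(m <- msupp p | top_mnm m) p@_m *: 'X_[tl m].

Definition rest_part p : {mpoly k[n]} :=
  \sum_(m <- msupp p | ~~ top_mnm m) p@_m *: subst_t 'X_[m].

Lemma subst_t_split p : subst_t p = f ^+ a * top_part p + rest_part p.
Proof.
rewrite {1}/subst_t comp_mpolyEX (bigID top_mnm) /=; congr (_ + _).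
rewrite mulr_sumr; apply: eq_bigr => m /andP [/eqP m0a _].
by rewrite -/(subst_t _) subst_tX m0a scalerAr.
Qed.

(* Monomials with the same t-exponent are determined by their x-part, so the
   top part records the coefficients of p faithfully. *)
Lemma mcoeff_top_part p m : top_mnm m -> (top_part p)@_(tl m) = p@_m.
Proof.
move=> tm; rewrite raddf_sum /= (eq_bigr (fun m' => p@_m' * (m' == m)%:R)); last first.
  move=> m' tm'; rewrite mcoeffZ mcoeffX.
  have same0 : m' ord0 = m ord0.
    by move: tm tm' => /andP [/eqP -> _] /andP [/eqP -> _].
  have [->|ne] := eqVneq m' m; first by rewrite eqxx.
  by rewrite (negbTE (contra_neq (tl_inj same0) ne)).
have [msm|nmsm] := boolP (m \in msupp p); last first.
  rewrite (memN_msupp_eq0 nmsm) big1 // => m' _.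
  by case: eqP => [->|_]; rewrite ?(memN_msupp_eq0 nmsm) ?mul0r ?mulr0.
rewrite big_mkcond (bigD1_seq m) ?msupp_uniq //= tm eqxx mulr1 big1 ?addr0 //.
by move=> m' /negbTE ne; case: ifP; rewrite ?ne ?mulr0.
Qed.

Lemma totdeg_top_part p : (totdeg (top_part p) <= b)%N.
Proof.
apply: totdeg_sum_le => m /andP [/eqP m0a /eqP dm].
by apply: leq_trans (totdegZ_le _ _) _; rewrite totdegX; move: (mdeg_tl m); lia.
Qed.

Hypothesis deg_f : (2 <= totdeg f)%N.
Hypothesis b_gt0 : (0 < b)%N.

(* Every other monomial of p allowed by the degree bounds has image of degree
   < deg f * a + b; this is where deg f >= 2 is needed. *)
Lemma totdeg_rest_part p :
  (forall m, m \in msupp p -> m ord0 <= a /\ mdeg m <= a + b)%N ->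
  (totdeg (rest_part p) < totdeg f * a + b)%N.
Proof.
move=> bnd; have deg_pos : (0 < totdeg f * a + b)%N by lia.
rewrite -(prednK deg_pos) ltnS /rest_part big_seq_cond.
apply: totdeg_sum_le => m /andP [/bnd [m0a dm] ntop].
apply: leq_trans (totdegZ_le _ _) _; rewrite subst_tX.
apply: leq_trans (totdegM_le _ _) _; rewrite totdegXn totdegX.
move: ntop (mdeg_tl m); rewrite /top_mnm negb_and.
move: (m ord0) (mdeg m) (mdeg (tl m)) (totdeg f) m0a dm deg_f => e s c d.
move=> le_ea le_sab le_2d /orP [] /eqP ne es; nia.
Qed.

Theorem totdeg_subst_t p :
  (forall m, m \in msupp p -> m ord0 <= a /\ mdeg m <= a + b)%N ->
  (exists2 m, m \in msupp p & top_mnm m) ->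
  totdeg (subst_t p) = (totdeg f * a + b)%N.
Proof.
move=> bnd [mt supp_mt top_mt].
have nz_f : f != 0 by apply: contraTneq deg_f => ->; rewrite totdeg0.
have supp_top : tl mt \in msupp (top_part p).
  by rewrite mcoeff_msupp mcoeff_top_part // -mcoeff_msupp.
have nz_top : top_part p != 0 by apply: contraTneq supp_top => ->; rewrite msupp0.
have deg_top : totdeg (top_part p) = b.
  apply/eqP; rewrite eqn_leq totdeg_top_part /=.
  move: (mdeg_le_totdeg supp_top) (mdeg_tl mt) top_mt => + + /andP [/eqP m0 /eqP dm].
  by rewrite m0 dm; lia.
have deg_lead : totdeg (f ^+ a * top_part p) = (totdeg f * a + b)%N.
  by rewrite totdegM ?expf_neq0 // totdegXn deg_top mulnC.
by rewrite subst_t_split totdegD_dom deg_lead // totdeg_rest_part.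
Qed.

End SubstitutionForT.

Lemma double_sum1 (V : nmodType) N (P : 'I_N -> 'I_N -> bool)
    (F : 'I_N -> 'I_N -> V) i1 j1 :
  P i1 j1 -> (forall i j, P i j -> (i, j) != (i1, j1) -> F i j = 0) ->
  \sum_i \sum_(j | P i j) F i j = F i1 j1.
Proof.
move=> P1 F0; rewrite pair_big_dep (bigD1 (i1, j1)) //= big1 ?addr0 //.
by move=> [i j] /andP [/= Pij ne]; apply: F0.
Qed.

Lemma double_sum2 (V : nmodType) N (P : 'I_N -> 'I_N -> bool)
    (F : 'I_N -> 'I_N -> V) i1 j1 i2 j2 :
  i1 != i2 -> P i1 j1 -> P i2 j2 ->
  (forall i j, P i j -> (i, j) != (i1, j1) -> (i, j) != (i2, j2) -> F i j = 0) ->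
  \sum_i \sum_(j | P i j) F i j = F i1 j1 + F i2 j2.
Proof.
move=> ne12 P1 P2 F0; rewrite pair_big_dep (bigD1 (i1, j1)) //= (bigD1 (i2, j2)) /=.
  by rewrite big1 ?addr0 // => -[i j] /andP [/andP [/= Pij ne1] ne2]; apply: F0.
by rewrite P2 xpair_eqE negb_and eq_sym ne12.
Qed.

Lemma mderiv_var (R : ringType) N (i j : 'I_N) :
  mderiv i ('X_j : {mpoly R[N]}) = (j == i)%:R.
Proof.
rewrite mderivX mnm1E; case: eqP => [->|_]; last by rewrite scale0r.
have -> : (U_(i) - U_(i) = 0)%MM by apply/mnmP => l; rewrite mnmBE subnn mnmE.
by rewrite mpolyX0 scale1r.
Qed.

(* Derivation commutes with finite sums (stated for the plain function, so
   that rewriting leaves mderiv syntactically in place). *)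
Lemma mderiv_sum (R : ringType) N (i : 'I_N) (I : Type) (r : seq I) (P : pred I)
    (F : I -> {mpoly R[N]}) :
  mderiv i (\sum_(x <- r | P x) F x) = \sum_(x <- r | P x) mderiv i (F x).
Proof. exact: raddf_sum. Qed.

(* The specialization x_j |-> 0 for 1 < j < n, used to bound deg f_[n] below. *)
Section EndsSpecialization.
Variables (k : fieldType) (n : nat).

Definition keep_ends (i : 'I_n) : {mpoly k[n]} :=
  if (val i == 0%N) || (val i == n.-1) then 'X_i else 0.

Definition ends_tuple : n.-tuple {mpoly k[n]} := [tuple keep_ends i | i < n].

Local Notation spec := (comp_mpoly ends_tuple).

Lemma spec_X i : spec 'X_i = keep_ends i.
Proof. by rewrite comp_mpolyXU -tnth_nth tnth_mktuple. Qed.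

Lemma spec_sum (I : Type) (r : seq I) (P : pred I) (F : I -> {mpoly k[n]}) :
  spec (\sum_(i <- r | P i) F i) = \sum_(i <- r | P i) spec (F i).
Proof. exact: raddf_sum. Qed.

Lemma totdeg_spec_le q : (totdeg (spec q) <= totdeg q)%N.
Proof.
apply: totdeg_comp_le => i; rewrite tnth_mktuple /keep_ends.
by case: ifP => _; rewrite ?totdegX ?mdeg1 ?totdeg0.
Qed.

Hypothesis char0 : [pchar k] =i pred0.
Hypothesis n_ge3 : (3 <= n)%N.

(* The 0-based indices of x_1, x_n and x_{n-1}. *)
Let n_gt0 : (0 < n)%N. Proof. lia. Qed.
Let pred_lt_n : (n.-1 < n)%N. Proof. lia. Qed.
Let sub2_lt_n : (n - 2 < n)%N. Proof. lia. Qed.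
Let idx_first : 'I_n := Ordinal n_gt0.
Let idx_last : 'I_n := Ordinal pred_lt_n.
Let idx_pre : 'I_n := Ordinal sub2_lt_n.

Let two_neq0 : (2%:R : k) != 0.
Proof. by move/pcharf0P: char0 => ->. Qed.

Lemma spec_XX (i j : 'I_n) :
  spec ('X_i * 'X_j) =
  if [&& (val i == 0%N) || (val i == n.-1) & (val j == 0%N) || (val j == n.-1)]
  then 'X_i * 'X_j else 0.
Proof.
rewrite rmorphM /= !spec_X /keep_ends.
by case: ifP => _; case: ifP => _; rewrite ?mul0r ?mulr0.
Qed.

Lemma spec_quadratic_odd :
  odd n -> spec (f_odd k n (n.+1./2)) = 'X_idx_first * 'X_idx_last.
Proof.
move=> odd_n; have e2 : (2 * n.+1./2 - 2 = n.-1)%N.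
  by have := odd_double_half n; rewrite -uphalfE uphalf_half odd_n -muln2 /=; lia.
rewrite /f_odd comp_mpolyZ spec_sum.
under eq_bigr => i _ do rewrite spec_sum.
under eq_bigr => i _ do under eq_bigr => j _ do rewrite comp_mpolyZ spec_XX.
rewrite (@double_sum2 _ _ _ _ idx_first idx_last idx_last idx_first) /=.
- have even_pred : odd n.-1 = false by case: n odd_n n_ge3 => //= m; case: (odd m).
  rewrite e2 /= eqxx orbT expr0 bin0 mul1r binn -signr_odd even_pred expr0 mul1r !scale1r.
  by rewrite [X in _ + X]mulrC -mulr2n -scaler_nat scalerA mulVf // scale1r.
- by rewrite -val_eqE /=; lia.
- by rewrite e2 /=; apply/eqP; lia.
- by rewrite e2 /=; apply/eqP; lia.
move=> [i lt_i] [j lt_j] /eqP /= hij ne1 ne2; case: ifP => ends; rewrite ?scaler0 //.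
by exfalso; move: ne1 ne2 ends hij; rewrite !xpair_eqE -!val_eqE e2 /=; lia.
Qed.

Let even_index : ~~ odd n -> (2 * n./2 - 2 = n - 2)%N.
Proof.
by move=> even_n; have := odd_double_half n; rewrite (negbTE even_n) -muln2 /=; lia.
Qed.

Lemma spec_quadratic_even : ~~ odd n -> spec (f_odd k n (n./2)) = 0.
Proof.
move=> even_n; rewrite /f_odd comp_mpolyZ spec_sum big1 ?scaler0 // => i _.
rewrite spec_sum big1 // => j /eqP hij.
rewrite comp_mpolyZ spec_XX; case: ifP => ends; rewrite ?scaler0 //.
by exfalso; move: ends hij; rewrite even_index //; case: i j => [i ?] [j ?] /=; lia.
Qed.

Lemma mderiv_quadratic_even :
  ~~ odd n -> mderiv idx_pre (f_odd k n (n./2)) = 'X_idx_first.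
Proof.
move=> even_n; rewrite /f_odd mderivZ mderiv_sum.
under eq_bigr => i _ do rewrite mderiv_sum.
under eq_bigr => i _ do under eq_bigr => j _ do rewrite mderivZ mderivM !mderiv_var.
rewrite (@double_sum2 _ _ _ _ idx_pre idx_first idx_first idx_pre) /=.
- have even_n2 : odd (n - 2) = false by rewrite oddB ?(negbTE even_n) //; lia.
  have -> : (idx_first == idx_pre) = false by rewrite -val_eqE /=; lia.
  rewrite even_index //= eqxx expr0 bin0 mul1r binn -signr_odd even_n2 expr0 mul1r.
  rewrite mul1r mulr0 addr0 mul0r add0r mulr1 !scale1r.
  by rewrite -mulr2n -scaler_nat scalerA mulVf // scale1r.
- by rewrite -val_eqE /=; lia.
- by rewrite even_index //=; apply/eqP; lia.
- by rewrite even_index //=; apply/eqP; lia.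
move=> [i lt_i] [j lt_j] /eqP /= hij ne1 ne2.
move: ne1 ne2 hij; rewrite !xpair_eqE -!val_eqE even_index //= => ne1 ne2 hij.
have -> : (i == n - 2)%N = false by apply/eqP; lia.
have -> : (j == n - 2)%N = false by apply/eqP; lia.
by rewrite mul0r mulr0 addr0 scaler0.
Qed.

Lemma spec_D_quadratic_even :
  ~~ odd n -> spec (Dop (f_odd k n (n./2))) = 'X_idx_last * 'X_idx_first.
Proof.
move=> even_n; rewrite /Dop spec_sum.
under eq_bigr => i _ do rewrite spec_sum.
under eq_bigr => i _ do under eq_bigr => j _ do rewrite comp_mpolyZ rmorphM /= spec_X.
rewrite (@double_sum1 _ _ _ _ idx_pre idx_last) /=; last first.
- move=> [i lt_i] [j lt_j] /eqP /= hij ne; rewrite /keep_ends /=.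
  case: ifP => ends; last by rewrite mul0r scaler0.
  by exfalso; move: ne ends hij; rewrite xpair_eqE -!val_eqE /=; lia.
- by apply/eqP => /=; lia.
rewrite mderiv_quadratic_even // spec_X /keep_ends /= !eqxx orbT.
have -> : (n - n.-1 = 1)%N by lia.
by rewrite scale1r.
Qed.

Lemma spec_f_n :
  spec (f_n k n) =
  if odd n then 'X_idx_first * 'X_idx_last else ('X_idx_last * 'X_idx_first) ^+ 2.
Proof.
rewrite /f_n; case: ifP => [|/negbT] odd_n; first exact: spec_quadratic_odd.
rewrite rmorphB rmorphXn !rmorphM /=.
by rewrite spec_D_quadratic_even // spec_quadratic_even // mulr0 subr0.
Qed.

(* Since specialization does not raise the degree, deg f_[n] >= 2. *)
Lemma totdeg_f_n : (2 <= totdeg (f_n k n))%N.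
Proof.
apply: leq_trans (totdeg_spec_le _); rewrite spec_f_n.
have nzX (i : 'I_n) : ('X_i : {mpoly k[n]}) != 0 by rewrite -msize_poly_eq0 msizeX.
case: ifP => _; rewrite ?totdegXn totdegM // !totdegX !mdeg1 //.
Qed.

End EndsSpecialization.

Section LeadingMonomial.
Variables (k : fieldType) (n : nat).
Implicit Types (p : {mpoly k[n.+1]}) (m : 'X_{1..n.+1}).

Lemma mdeg_le_wdeg_w1 p m : m \in msupp p -> (mdeg m <= wdeg (@w1 n) p)%N.
Proof.
move=> msm; apply: leq_trans (leq_bigmax_seq _ msm isT).
by rewrite mdegE; apply/eq_leq/eq_bigr => i _; rewrite /w1 mul1n.
Qed.

Lemma lt_is_t_exponent p a b m : lt_is p a b -> m \in msupp p -> (m ord0 <= a)%N.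
Proof.
have mono0 : mono_tx n a b ord0 = a by rewrite mnmE.
move=> [_ lex_lt] msm; have [->|ne] := eqVneq m (mono_tx n a b); first by rewrite mono0.
have /existsP [i /andP [/forallP eq_before lt_i]] := lex_lt m msm ne.
case: (unliftP ord0 i) => [j|] ei; subst i; last by rewrite -mono0 ltnW.
by move/(_ ord0): eq_before => /= /eqP ->; rewrite mono0.
Qed.

Lemma mono_tx_top a b : (0 < n)%N -> top_mnm a b (mono_tx n a b).
Proof.
move=> n_gt0; have lt_last : (n.-1 < n)%N by rewrite prednK.
rewrite /top_mnm mdeg_tl mnmE eqxx eqn_add2l /=.
rewrite mdegE (bigD1 (Ordinal lt_last)) //= big1 ?addn0.
  by rewrite !mnmE /= /bump leq0n add1n prednK ?eqxx.
move=> i ne; rewrite !mnmE /= /bump leq0n add1n; case: ifP => [/eqP e|//].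
by move/eqP: ne; case; apply: val_inj => /=; lia.
Qed.

End LeadingMonomial.

Theorem lemma5p4 (k : fieldType) (n : nat) (alpha beta : nat) (p : {mpoly k[n.+1]}) :
  [pchar k] =i pred0 ->
  (3 <= n)%N -> (1 <= alpha)%N -> (1 <= beta)%N ->
  calP alpha beta p ->
  totdeg (pi_f p) = (totdeg (f_n k n) * alpha + beta)%N /\ (3 <= totdeg (pi_f p))%N.
Proof.
move=> char0 n_ge3 alpha_gt0 beta_gt0 [_ w1_bound _ leading].
have deg_f := totdeg_f_n char0 n_ge3.
have bounds m : m \in msupp p -> (m ord0 <= alpha /\ mdeg m <= alpha + beta)%N.
  move=> msm; split; first exact: lt_is_t_exponent leading msm.
  exact: leq_trans (mdeg_le_wdeg_w1 msm) w1_bound.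
have top : exists2 m, m \in msupp p & top_mnm alpha beta m.
  by exists (mono_tx n alpha beta); [case: leading | apply: mono_tx_top; lia].
have deg_pi : totdeg (pi_f p) = (totdeg (f_n k n) * alpha + beta)%N.
  exact: (totdeg_subst_t deg_f beta_gt0 bounds top).
by rewrite deg_pi; split => //; nia.
Qed.
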